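(* Let $\Sigma$ be an alphabet and $L\subseteq\Sigma^*$. There exists an MPDA $\mathcal A$ with input alphabet $\Sigma$ and $L(\mathcal A)=L$ if and only if $L$ is context-free and every string in $L$ has length at least $2$.
   Context: A Moore push-down automaton (MPDA) is $\mathcal A=(Q,\Sigma,\Gamma,\delta,\tau,I,F)$ with finite sets of states $Q$, input symbols $\Sigma$, stack symbols $\Gamma$, transitions $\delta\subseteq(Q\times\Gamma^{\le1}\times\Gamma^{\le1}\times Q)\setminus(Q\times\Gamma\times\Gamma\times Q)$ (where $\Gamma^{\le1}=\{\varepsilon\}\cup\Gamma$; so a transition pops one symbol, pushes one symbol, or ignores the stack), output function $\tau:Q\to\Sigma$, and initial/final states $I,F\subseteq Q$. Configurations are pairs $\langle q,\alpha\rangle\in Q\times\Gamma^*$ (top of stack leftmost). Moves: $\langle q,\gamma\alpha\rangle\vdash\langle q',\gamma'\alpha\rangle$ for $(q,\gamma,\gamma',q')\in\delta$, $\alpha\in\Gamma^*$, provided $\gamma\alpha\neq\varepsilon$. A configuration is initial if $q\in I$ and $\alpha\in\Gamma$ (exactly one stack symbol), final if $q\in F$ and $\alpha=\varepsilon$. An accepting run is a sequence $\langle q_0,\alpha_0\rangle,\dots,\langle q_n,\alpha_n\rangle$ of configurations related successively by moves, starting in an initial and ending in a final configuration. $L(\mathcal A)$ is the set of strings $\tau(q_0)\cdots\tau(q_n)$ over all accepting runs. *)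

From mathcomp Require Import all_boot.
Set Implicit Arguments.
Unset Strict Implicit.
Unset Printing Implicit Defensive.

(* seq of a Gamma^{<=1} element: None = epsilon, Some g = g *)
Definition oseq (T : Type) (o : option T) : seq T :=
  if o is Some g then [:: g] else [::].

Record MPDA (Sigma : finType) := {
  mQ : finType;
  mGamma : finType;
  mdelta : pred (mQ * option mGamma * option mGamma * mQ);
  mdelta_ok : forall q g g' q', ~~ mdelta (q, Some g, Some g', q');
  mtau : mQ -> Sigma;
  mI : pred mQ;
  mF : pred mQ
}.

Definition config (Sigma : finType) (A : MPDA Sigma) : Type :=
  (mQ A * seq (mGamma A))%type.

(* one move  <q, gamma alpha> |- <q', gamma' alpha>, with gamma alpha <> eps;
   top of stack is the head of the list *)
Definition mstep (Sigma : finType) (A : MPDA Sigma) (c c' : config A) : Prop :=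
  exists (g g' : option (mGamma A)) (alpha : seq (mGamma A)),
    @mdelta _ A (c.1, g, g', c'.1) /\
    c.2 = oseq g ++ alpha /\ c'.2 = oseq g' ++ alpha /\
    oseq g ++ alpha <> [::].

Definition minitial (Sigma : finType) (A : MPDA Sigma) (c : config A) : Prop :=
  @mI _ A c.1 /\ size c.2 = 1.

Definition mfinal (Sigma : finType) (A : MPDA Sigma) (c : config A) : Prop :=
  @mF _ A c.1 /\ c.2 = [::].

Definition MPDA_lang (Sigma : finType) (A : MPDA Sigma) (w : seq Sigma) : Prop :=
  exists (n : nat) (c : nat -> config A),
    minitial (c 0) /\ mfinal (c n) /\
    (forall i, i < n -> mstep (c i) (c i.+1)) /\
    w = [seq @mtau _ A (c i).1 | i <- iota 0 n.+1].

Record CFG (Sigma : finType) := {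
  gN : finType;
  gS : gN;
  gP : seq (gN * seq (gN + Sigma))
}.

Definition gderive1 (Sigma : finType) (G : CFG Sigma)
    (u v : seq (gN G + Sigma)) : Prop :=
  exists (x y : seq (gN G + Sigma)) (X : gN G) (rhs : seq (gN G + Sigma)),
    (X, rhs) \in @gP _ G /\ u = x ++ inl X :: y /\ v = x ++ rhs ++ y.

Inductive gderives (Sigma : finType) (G : CFG Sigma) :
    seq (gN G + Sigma) -> seq (gN G + Sigma) -> Prop :=
| gderives_refl u : @gderives Sigma G u u
| gderives_step u v w : @gderive1 Sigma G u v -> @gderives Sigma G v w -> @gderives Sigma G u w.

Definition CFG_lang (Sigma : finType) (G : CFG Sigma) (w : seq Sigma) : Prop :=
  @gderives _ G [:: inl (@gS _ G)] (map inr w).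

Definition context_free (Sigma : finType) (L : seq Sigma -> Prop) : Prop :=
  exists G : CFG Sigma, forall w, CFG_lang G w <-> L w.

From mathcomp Require Import all_boot boolp.
Set Implicit Arguments.
Unset Strict Implicit.
Unset Printing Implicit Defensive.

(* From an MPDA to a grammar: the classical triple construction.  An accepting
   run starts with one stack symbol and ends with none, so it makes at least
   one move and outputs at least two letters.

   From a grammar to an MPDA: a suffix d of a right-hand side together with a
   left-corner path from T to B defines an item, whose language is L(d) times
   the words that follow B on that path.  After its first letter, every word
   of an item language lies in a product of two item languages whose product,
   prefixed by that letter, stays inside the item language.  Dropping the empty
   word, the item languages behave like the nonterminals of a grammar in
   quadratic Greibach normal form, which the machine simulates: it keeps the
   last output letter and the current item in its state and the remaining items
   on its stack, and replaces the current item by zero, one or two items by a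
   pop, an idle move or a push.  For the start, the first letter of a word of
   L is output by the initial state, with the left-corner path from the start
   symbol to that letter as the item. *)

Fixpoint cat_lang (I S : Type) (K : I -> seq S -> Prop) (r : seq I) (w : seq S) : Prop :=
  if r is i :: r' then exists u v, w = u ++ v /\ K i u /\ cat_lang K r' v else w = [::].

Section Languages.
Variables (I S : Type) (K : I -> seq S -> Prop).

Lemma cat_lang_cat r1 r2 w1 w2 :
  cat_lang K r1 w1 -> cat_lang K r2 w2 -> cat_lang K (r1 ++ r2) (w1 ++ w2).
Proof.
elim: r1 w1 => [|i r1 IH] w1 /=; first by move=> ->.
move=> [u [v [-> [Ku Kv]]]] K2; exists u, (v ++ w2).
by rewrite catA; split => //; split => //; apply: IH.
Qed.

Lemma cat_lang_catP r1 r2 w : cat_lang K (r1 ++ r2) w ->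
  exists w1 w2, [/\ w = w1 ++ w2, cat_lang K r1 w1 & cat_lang K r2 w2].
Proof.
elim: r1 w => [|i r1 IH] w /=; first by exists [::], w.
move=> [u [v [-> [Ku /IH [w1 [w2 [-> K1 K2]]]]]]].
by exists (u ++ w1), w2; rewrite catA; split => //; exists u, w1.
Qed.

Definition nonempty_lang i w := w <> [::] /\ K i w.

Lemma cat_lang_drop_nil r0 w : cat_lang K r0 w -> exists2 r, size r <= size r0 &
  cat_lang nonempty_lang r w /\ forall x, cat_lang nonempty_lang r x -> cat_lang K r0 x.
Proof.
elim: r0 w => [|i r0 IH] w /=; first by move=> ->; exists [::].
move=> [[|a u] [v [-> [Ku /IH [r le_r [Kv Kr]]]]]].
  exists r; first exact: leqW.
  by split => // x /Kr; exists [::], x.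
exists (i :: r) => //.
split; first by exists (a :: u), v.
by move=> _ [u' [x [-> [[_ Ku'] /Kr]]]]; exists u', x.
Qed.

Definition greibach (F : I -> seq S -> Prop) := forall i a w, F i (a :: w) ->
  exists r, size r <= 2 /\ cat_lang F r w /\ forall x, cat_lang F r x -> F i (a :: x).

Definition split2 (P : seq S -> Prop) a w := exists i1 i2 w1 w2,
  [/\ w = w1 ++ w2, K i1 w1, K i2 w2 & forall x1 x2, K i1 x1 -> K i2 x2 -> P (a :: x1 ++ x2)].

Lemma split2_weaken (P P' : seq S -> Prop) a w :
  (forall x, P x -> P' x) -> split2 P a w -> split2 P' a w.
Proof.
move=> PP' [i1 [i2 [w1 [w2 [-> K1 K2 Pw]]]]].
by exists i1, i2, w1, w2; split => // x1 x2 K1x K2x; apply/PP'/Pw.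
Qed.

Lemma greibach_nonempty_lang :
  (forall i a w, K i (a :: w) -> split2 (K i) a w) -> greibach nonempty_lang.
Proof.
move=> Ksplit i a w [_ /Ksplit [i1 [i2 [w1 [w2 [-> K1 K2 Ki]]]]]].
have [|r le_r [Kw Kr]] := @cat_lang_drop_nil [:: i1; i2] (w1 ++ w2).
  by exists w1, w2; split => //; split => //; exists w2, [::]; rewrite cats0.
exists r; split => //; split => // x /Kr [x1 [_ [-> [K1x [x2 [_ [-> [K2x ->]]]]]]]].
by split => //; rewrite cats0; apply: Ki.
Qed.

End Languages.

Section Runs.
Variables (Sigma : finType) (A : MPDA Sigma).
Local Notation tau := (@mtau _ A).

Inductive mrun : config A -> config A -> seq Sigma -> Prop :=
| mrun0 c : mrun c c [::]
| mrunS c c1 c2 w : mstep c c1 -> mrun c1 c2 w -> mrun c c2 (tau c1.1 :: w).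

Lemma mrun_cat c1 c2 c3 u v : mrun c1 c2 u -> mrun c2 c3 v -> mrun c1 c3 (u ++ v).
Proof. by elim=> // c c' c'' w step _ IH /IH; apply: mrunS step. Qed.

Lemma mrun_nil c c' : mrun c c' [::] -> c' = c.
Proof. by move=> run; inversion run. Qed.

Lemma mrun_of_steps n (f : nat -> config A) :
  (forall i, i < n -> mstep (f i) (f i.+1)) ->
  mrun (f 0) (f n) [seq tau (f i).1 | i <- iota 1 n].
Proof.
elim: n f => [|n IH] f steps; first exact: mrun0.
have -> : [seq tau (f i).1 | i <- iota 1 n.+1] =
    tau (f 1).1 :: [seq tau (f i.+1).1 | i <- iota 1 n].
  by rewrite /= -[2]/(1 + 1) iotaDl -map_comp.
exact: mrunS (steps 0 isT) (IH (f \o succn) (fun i lt_in => steps i.+1 lt_in)).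
Qed.

Lemma steps_of_mrun c c' u : mrun c c' u -> exists n (f : nat -> config A),
  [/\ f 0 = c, f n = c', forall i, i < n -> mstep (f i) (f i.+1)
    & u = [seq tau (f i).1 | i <- iota 1 n]].
Proof.
elim=> [c0|c0 c1 c2 w step _ [n [f [f0 fn steps ->]]]]; first by exists 0, (fun _ => c0).
exists n.+1, (fun i => if i is i'.+1 then f i' else c0); split => //.
  by case=> [|i] /= lt_in; [rewrite f0 | apply: steps].
by rewrite /= f0 -[2]/(1 + 1) iotaDl -map_comp.
Qed.

Lemma MPDA_langE w : MPDA_lang A w <->
  exists c0 c u, [/\ minitial c0, mfinal c, mrun c0 c u & w = tau c0.1 :: u].
Proof.
split=> [[n [f [init [fin [steps ->]]]]]|[c0 [c [u [init fin run ->]]]]].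
  by exists (f 0), (f n), [seq tau (f i).1 | i <- iota 1 n]; split => //; exact: mrun_of_steps.
have [n [f [f0 fn steps ->]]] := steps_of_mrun run.
by exists n, f; rewrite /= f0 fn.
Qed.

End Runs.

Section Generation.
Variables (Sigma : finType) (G : CFG Sigma).
Local Notation sym := (gN G + Sigma)%type.
Local Notation derives := (@gderives _ G).

Inductive generates : seq sym -> seq Sigma -> Prop :=
| gen_nil : generates [::] [::]
| gen_term a s w : generates s w -> generates (inr a :: s) (a :: w)
| gen_rule X rhs s u v : (X, rhs) \in gP G -> generates rhs u -> generates s v ->
    generates (inl X :: s) (u ++ v).

Lemma generates_cat s1 s2 w1 w2 :
  generates s1 w1 -> generates s2 w2 -> generates (s1 ++ s2) (w1 ++ w2).
Proof.
move=> gen1 gen2; elim: gen1 => //= [a s w _ IH|X rhs s u v XP gen_u _ _ IH].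
  exact: gen_term.
by rewrite -catA; apply: gen_rule XP gen_u IH.
Qed.

Lemma generates_catP s1 s2 w : generates (s1 ++ s2) w ->
  exists w1 w2, [/\ w = w1 ++ w2, generates s1 w1 & generates s2 w2].
Proof.
elim: s1 w => [|x s1 IH] w /= gen_w; first by exists [::], w; split => //; exact: gen_nil.
inversion gen_w as [|a s0 w0 gen_s|X rhs s0 u v XP gen_u gen_v]; subst.
  have [w1 [w2 [-> gen1 gen2]]] := IH _ gen_s.
  by exists (a :: w1), w2; split => //; apply: gen_term.
have [w1 [w2 [-> gen1 gen2]]] := IH _ gen_v.
by exists (u ++ w1), w2; rewrite catA; split => //; apply: gen_rule XP gen_u gen1.
Qed.

Lemma generates_nilE w : generates [::] w -> w = [::].
Proof. by move=> gen_w; inversion gen_w. Qed.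

Lemma generates_terms t : generates (map inr t) t.
Proof. by elim: t => [|a t IH]; [apply: gen_nil | apply: gen_term]. Qed.

Lemma generates_nonterm X w :
  generates [:: inl X] w <-> exists2 rhs, (X, rhs) \in gP G & generates rhs w.
Proof.
split=> [gen_w|[rhs XP gen_w]]; last by rewrite -[w]cats0; apply: gen_rule XP gen_w gen_nil.
inversion gen_w as [| |X0 rhs s u v XP gen_u gen_v]; subst.
by rewrite (generates_nilE gen_v) cats0; exists rhs.
Qed.

Lemma gderives_trans u v w : derives u v -> derives v w -> derives u w.
Proof. by elim=> // u0 v0 w0 step _ IH /IH; apply: gderives_step step. Qed.

Lemma gderives_ctx x y u v : derives u v -> derives (x ++ u ++ y) (x ++ v ++ y).
Proof.
elim=> [u0|u0 v0 w0 [x0 [y0 [X [rhs [XP [-> ->]]]]]] _ IH]; first exact: gderives_refl.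
apply: gderives_step IH; exists (x ++ x0), (y0 ++ y), X, rhs.
by rewrite -!catA.
Qed.

Lemma generates_gderives s w : generates s w -> derives s (map inr w).
Proof.
elim=> [|a s0 w0 _ IH|X rhs s0 u v XP _ IHu _ IHv]; first exact: gderives_refl.
  by have := gderives_ctx [:: inr a] [::] IH; rewrite !cats0.
apply: (@gderives_step _ _ _ (rhs ++ s0)); first by exists [::], s0, X, rhs.
apply: (@gderives_trans _ (map inr u ++ s0)); first exact: (gderives_ctx [::] s0 IHu).
by have := gderives_ctx (map inr u) [::] IHv; rewrite map_cat !cats0.
Qed.

Lemma gderive1_generates u v w : @gderive1 _ G u v -> generates v w -> generates u w.
Proof.
move=> [x [y [X [rhs [XP [-> ->]]]]]] /generates_catP [w1 [w2 [-> gen1]]].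
move=> /generates_catP [w3 [w4 [-> gen3 gen4]]].
by apply: generates_cat gen1 _; apply: gen_rule XP gen3 gen4.
Qed.

Lemma gderives_generates u w : derives u (map inr w) -> generates u w.
Proof.
move=> der; move Ew: (map inr w) der => v der; elim: der Ew => [u0 <-|u0 v0 w0 step _ IH Ew].
  exact: generates_terms.
exact: gderive1_generates step (IH Ew).
Qed.

Lemma CFG_langE w : CFG_lang G w <-> generates [:: inl (gS G)] w.
Proof. by split; [apply: gderives_generates | apply: generates_gderives]. Qed.

End Generation.

Section TripleGrammar.
Variables (Sigma : finType) (A : MPDA Sigma).
Local Notation Q := (mQ A).
Local Notation Ga := (mGamma A).
Local Notation tau := (@mtau _ A).
Local Notation delta := (@mdelta _ A).

(* The nonterminal Some (p, X, q) generates the outputs of the runs from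
   (p, X :: beta) to (q, beta) that never look below X, the output of p excluded. *)
Definition triple : finType := (Q * Ga * Q)%type.
Local Notation sym := (option triple + Sigma)%type.

Definition nts (ch : seq triple) : seq sym := [seq inl (Some x) | x <- ch].
Definition stk (ch : seq triple) : seq Ga := [seq x.1.2 | x <- ch].

Fixpoint chain (p : Q) (ch : seq triple) (q : Q) : Prop :=
  if ch is (p1, _, q1) :: ch' then p1 = p /\ chain q1 ch' q else p = q.

Inductive triple_rule : option triple -> seq sym -> Prop :=
| start_rule p X q : @mI _ A p -> @mF _ A q ->
    triple_rule None (inr (tau p) :: nts [:: (p, X, q)])
| pop_rule p X q : delta (p, Some X, None, q) ->
    triple_rule (Some (p, X, q)) (inr (tau q) :: nts [::])
| skip_rule p p' X q : delta (p, None, None, p') ->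
    triple_rule (Some (p, X, q)) (inr (tau p') :: nts [:: (p', X, q)])
| push_rule p p' Y X r q : delta (p, None, Some Y, p') ->
    triple_rule (Some (p, X, q)) (inr (tau p') :: nts [:: (p', Y, r); (r, X, q)]).

Definition rule_shape : finType :=
  ((triple + triple) + ((Q * Q * Ga * Q) + (Q * Q * Ga * Ga * Q * Q)))%type.

Definition rule_of_shape (d : rule_shape) : option triple * seq sym :=
  match d with
  | inl (inl (p, X, q)) => (None, inr (tau p) :: nts [:: (p, X, q)])
  | inl (inr (p, X, q)) => (Some (p, X, q), inr (tau q) :: nts [::])
  | inr (inl (p, p', X, q)) => (Some (p, X, q), inr (tau p') :: nts [:: (p', X, q)])
  | inr (inr (p, p', Y, X, r, q)) =>
      (Some (p, X, q), inr (tau p') :: nts [:: (p', Y, r); (r, X, q)])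
  end.

Definition triple_grammar : CFG Sigma := {|
  gS := None;
  gP := [seq x <- map rule_of_shape (enum rule_shape) | `[< triple_rule x.1 x.2 >]] |}.

Lemma mem_triple_grammar N rhs : (N, rhs) \in gP triple_grammar <-> triple_rule N rhs.
Proof.
rewrite mem_filter; split=> [/andP [/asboolP //]|ruleP].
apply/andP; split; first exact/asboolP.
apply/mapP; case: ruleP => [p X q|p X q|p p' X q|p p' Y X r q] _.
- by exists (inl (inl (p, X, q))); rewrite ?mem_enum.
- by exists (inl (inr (p, X, q))); rewrite ?mem_enum.
- by exists (inr (inl (p, p', X, q))); rewrite ?mem_enum.
- by exists (inr (inr (p, p', Y, X, r, q))); rewrite ?mem_enum.
Qed.

Local Notation generates := (@generates _ triple_grammar).

Lemma chain_cat p ch1 ch2 q :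
  chain p (ch1 ++ ch2) q <-> exists r, chain p ch1 r /\ chain r ch2 q.
Proof.
elim: ch1 p => [|[[p1 X] q1] ch1 IH] p /=; first by split=> [|[r [-> //]]]; exists p.
split=> [[-> /IH [r [ch1P ch2P]]]|[r [[-> ch1P] ch2P]]]; first by exists r.
by split=> //; apply/IH; exists r.
Qed.

Lemma generates_nts_cons x a ch' ch u v : triple_rule (Some x) (inr a :: nts ch') ->
  generates (nts ch') u -> generates (nts ch) v -> generates (nts (x :: ch)) (a :: u ++ v).
Proof.
move=> /mem_triple_grammar xP gen_u gen_v.
exact: gen_rule xP (gen_term a gen_u) gen_v.
Qed.

Lemma triple_rule_mstep p X q rhs (beta : seq Ga) : triple_rule (Some (p, X, q)) rhs ->
  exists p' ch', [/\ rhs = inr (tau p') :: nts ch', chain p' ch' q &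
    mstep ((p, X :: beta) : config A) (p', stk ch' ++ beta)].
Proof.
move E: (Some (p, X, q)) => N ruleP.
case: ruleP E => [//|p0 X0 q0 dP|p0 p' X0 q0 dP|p0 p' Y X0 r q0 dP] [-> -> ->].
- by exists q0, [::]; split => //; exists (Some X0), None, beta.
- by exists p', [:: (p', X0, q0)]; split => //; exists None, None, (X0 :: beta).
- by exists p', [:: (p', Y, r); (r, X0, q0)]; split => //; exists None, (Some Y), (X0 :: beta).
Qed.

Lemma mstep_triple_rule p X (beta : seq Ga) (c : config A) :
  mstep ((p, X :: beta) : config A) c -> exists2 gam, c.2 = gam ++ beta &
    forall ch' r, stk ch' = gam -> chain c.1 ch' r ->
      triple_rule (Some (p, X, r)) (inr (tau c.1) :: nts ch').
Proof.
case: c => p' s [[Z|] [[Y|] [al [/= dP [Es [-> _]]]]]].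
- by move: (mdelta_ok p Z Y p'); rewrite dP.
- case: Es => -> ->; exists [::] => // -[|x ch'] r E; try discriminate E.
  by move=> /= <-; apply: pop_rule.
- move: Es => /= <-; exists [:: Y; X] => //.
  case=> [|[[p1 Y1] r1] [|[[p2 X2] r2] [|x ch']]] r E //=; try discriminate E.
  by case: E => -> -> [-> [-> ->]]; apply: push_rule.
- move: Es => /= <-; exists [:: X] => //.
  case=> [|[[p1 X1] r1] [|x ch']] r E //=; try discriminate E.
  by case: E => -> [-> ->]; apply: skip_rule.
Qed.

Lemma chain_stk_cat p ch q gam beta : chain p ch q -> stk ch = gam ++ beta ->
  exists ch1 ch2 r, [/\ ch = ch1 ++ ch2, chain p ch1 r, chain r ch2 q,
    stk ch1 = gam & stk ch2 = beta].
Proof.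
move=> chP stkP; rewrite -(cat_take_drop (size gam) ch) in chP.
case/chain_cat: chP => r [ch1P ch2P].
exists (take (size gam) ch), (drop (size gam) ch), r.
by rewrite cat_take_drop /stk map_take map_drop -/(stk ch) stkP take_size_cat // drop_size_cat.
Qed.

Lemma mrun_generates c c' u : mrun c c' u -> c'.2 = [::] ->
  exists ch, [/\ chain c.1 ch c'.1, stk ch = c.2 & generates (nts ch) u].
Proof.
elim=> [[p s] /= ->|c0 c1 c2 w step _ IH /IH [ch1 [ch1P stk1 gen_w]]].
  by exists [::]; split => //; apply: gen_nil.
case: c0 step => p [|X beta] step; first by case: step => g [g' [al [_ [/= E [_ /(_ (esym E))]]]]].
have [gam stk_c1 ruleP] := mstep_triple_rule step.
have [chA [chB [r [Ech chAP chBP stkA stkB]]]] := chain_stk_cat ch1P (etrans stk1 stk_c1).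
move: gen_w; rewrite Ech /nts map_cat => /generates_catP [wA [wB [-> gen_A gen_B]]].
exists ((p, X, r) :: chB); split => //=; first by rewrite stkB.
exact: generates_nts_cons (ruleP _ _ stkA chAP) gen_A gen_B.
Qed.

Lemma generates_mrun s w : generates s w -> forall t ch p q (beta : seq Ga),
  s = map inr t ++ nts ch -> chain p ch q ->
  exists2 w', w = t ++ w' & mrun ((p, stk ch ++ beta) : config A) (q, beta) w'.
Proof.
elim=> [|a s0 w0 _ IH|N rhs s0 u v NP _ IHu _ IHv] [|b t] ch p q beta //=.
- by case: ch => // _ ->; exists [::] => //; apply: mrun0.
- by case: ch.
- case=> <- E chP; have [w' -> run] := IH t ch p q beta E chP.
  by exists w'.
- case: ch => [|[[p0 X] q1] ch] //= [EN Es] [<- chP].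
  move: NP; rewrite EN => /mem_triple_grammar /(triple_rule_mstep (stk ch ++ beta)).
  move=> [p' [ch' [Erhs ch'P step]]].
  have [u' -> run_u] := IHu [:: tau p'] ch' p' q1 (stk ch ++ beta) Erhs ch'P.
  have [v' -> run_v] := IHv [::] ch q1 q beta Es chP.
  exists (tau p' :: u' ++ v') => //; apply: mrunS step _.
  exact: mrun_cat run_u run_v.
Qed.

Lemma triple_grammar_correct w : CFG_lang triple_grammar w <-> MPDA_lang A w.
Proof.
rewrite CFG_langE generates_nonterm MPDA_langE; split.
  case=> rhs /mem_triple_grammar; move E: (gS _) => N ruleP.
  case: ruleP E => // p X q init fin _.
  move=> /generates_mrun /(_ [:: tau p] [:: (p, X, q)] p q [::] erefl (conj erefl erefl)).
  case=> u -> run.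
  by exists (p, [:: X]), (q, [::]), u.
case=> [[p s0] [[q s] [u [[init size1] [fin /= Es] run ->]]]].
case: s0 init size1 run => [|X [|? ?]] //= init _ run.
have [[|[[p0 X0] q0] [|? ?]] [chP stkP gen_u]] := mrun_generates run Es; try discriminate stkP.
move: gen_u; case: chP stkP => -> -> [->] gen_u.
exists (inr (tau p) :: nts [:: (p, X, q)]); last exact: gen_term.
by apply/mem_triple_grammar; apply: start_rule.
Qed.

Lemma MPDA_lang_size w : MPDA_lang A w -> 2 <= size w.
Proof.
rewrite MPDA_langE => -[c0 [c [[|a u] [[_ size1] [_ Ec] run ->]]]] //.
by move: size1; rewrite -(mrun_nil run) Ec.
Qed.

End TripleGrammar.

Section LeftCorner.
Variables (Sigma : finType) (G : CFG Sigma).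
Local Notation sym := (gN G + Sigma)%type.
Local Notation generates := (@generates _ G).

(* lcorner Y X v: Y derives beta X v with beta nullable, through a chain of
   left corners. *)
Inductive lcorner : sym -> sym -> seq Sigma -> Prop :=
| lcorner_refl X : lcorner X X [::]
| lcorner_step Y X B beta delta u v : (B, beta ++ X :: delta) \in gP G ->
    generates beta [::] -> generates delta u -> lcorner Y (inl B) v ->
    lcorner Y X (u ++ v).

Lemma lcorner_trans Y X Z u v : lcorner Y X u -> lcorner X Z v -> lcorner Y Z (v ++ u).
Proof.
move=> lcYX lcXZ; elim: lcXZ lcYX => // X0 Z0 B beta delta u0 v0 BP gen_beta gen_delta _ IH lcYX.
by rewrite -catA; apply: lcorner_step BP gen_beta gen_delta (IH lcYX).
Qed.

Lemma lcorner_generates Y X v u :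
  lcorner Y X v -> generates [:: X] u -> generates [:: Y] (u ++ v).
Proof.
move=> lc; elim: lc u => [X0|Y0 X0 B beta delta u0 v0 BP gen_beta gen_delta _ IH] u gen_u.
  by rewrite cats0.
rewrite catA; apply/IH/generates_nonterm; exists (beta ++ X0 :: delta) => //.
by rewrite -[u ++ u0]cat0s; apply: generates_cat gen_beta (generates_cat gen_u gen_delta).
Qed.

Lemma generates_first_letter s a w : generates s (a :: w) ->
  exists beta X delta u1 u2, [/\ s = beta ++ X :: delta, generates beta [::],
    lcorner X (inr a) u1, generates delta u2 & w = u1 ++ u2].
Proof.
move Ew: (a :: w) => w0 gen_s.
elim: gen_s a w Ew => // [b s0 w1 gen_s0 _|X rhs s0 u v XP gen_u IHu gen_v IHv] a w.
  case=> -> ->; exists [::], (inr b), s0, [::], w1.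
  by split => //; [exact: gen_nil | exact: lcorner_refl].
case: u gen_u IHu => [|b u] gen_u IHu /= Ew.
  have [beta [Y [delta [u1 [u2 [-> gen_beta lc gen_delta ->]]]]]] := IHv a w Ew.
  exists (inl X :: beta), Y, delta, u1, u2; split => //.
  exact: gen_rule XP gen_u gen_beta.
case: Ew => -> ->.
have [beta [Y [delta [u1 [u2 [Erhs gen_beta lc gen_delta ->]]]]]] := IHu b u erefl.
exists [::], (inl X), s0, (u1 ++ u2), v; split => //; first exact: gen_nil.
apply: lcorner_trans lc; rewrite -[u2]cats0.
by rewrite Erhs in XP; apply: lcorner_step XP gen_beta gen_delta (lcorner_refl _).
Qed.

Lemma generates_lcorner X a w : generates [:: X] (a :: w) <-> lcorner X (inr a) w.
Proof.
split=> [/generates_first_letter [beta [Y [delta [u1 [u2 [Es _ lc gen_delta ->]]]]]]|lc].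
  case: beta Es => [|? beta] [-> Edelta]; last by case: beta Edelta.
  by rewrite -Edelta in gen_delta; rewrite (generates_nilE gen_delta) cats0.
exact: lcorner_generates lc (gen_term a (gen_nil G)).
Qed.

End LeftCorner.

Lemma drop_size_cat_cons (T : Type) (beta delta : seq T) X :
  drop (size beta).+1 (beta ++ X :: delta) = delta.
Proof. by rewrite -cat_rcons drop_size_cat ?size_rcons. Qed.

Section Items.
Variables (Sigma : finType) (G : CFG Sigma).
Local Notation sym := (gN G + Sigma)%type.
Local Notation generates := (@generates _ G).
Local Notation lcorner := (@lcorner _ G).

Definition rhs_suffixes : seq (seq sym) :=
  [::] :: [seq drop k r.2 | r <- gP G, k <- iota 0 (size r.2)].

Lemma nil_rhs_suffix : [::] \in rhs_suffixes.
Proof. exact: mem_head. Qed.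

Lemma drop_rhs_suffix B rhs k : (B, rhs) \in gP G -> drop k rhs \in rhs_suffixes.
Proof.
move=> BP; have [lt_k|le_k] := ltnP k (size rhs); last by rewrite drop_oversize ?nil_rhs_suffix.
by rewrite inE; apply/orP; right; apply/allpairsPdep; exists (B, rhs), k; rewrite mem_iota.
Qed.

Lemma rhs_suffix_drop d k : d \in rhs_suffixes -> drop k d \in rhs_suffixes.
Proof.
rewrite inE => /predU1P [->|/allpairsPdep [[B rhs] [k' [BP _ ->]]]]; first exact: nil_rhs_suffix.
by rewrite drop_drop; apply: drop_rhs_suffix BP.
Qed.

Definition corner_lang (d : seq sym) (T B : sym) (w : seq Sigma) : Prop :=
  exists u v, [/\ w = u ++ v, generates d u & lcorner T B v].

Definition item : finType := (seq_sub rhs_suffixes * sym * sym)%type.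

Definition item_lang (i : item) : seq Sigma -> Prop := corner_lang (val i.1.1) i.1.2 i.2.

Lemma split_first d T B a u v : d \in rhs_suffixes -> generates d (a :: u) ->
  lcorner T B v -> split2 item_lang (corner_lang d T B) a (u ++ v).
Proof.
move=> dP /generates_first_letter [beta [X [delta [u1 [u2 [Ed gen_beta lc gen_delta ->]]]]]].
have deltaP : delta \in rhs_suffixes.
  by rewrite -(drop_size_cat_cons beta delta X) -Ed rhs_suffix_drop.
exists (SeqSub nil_rhs_suffix, X, inr a), (SeqSub deltaP, T, B), u1, (u2 ++ v); split.
- by rewrite catA.
- by exists [::], u1; split => //; exact: gen_nil.
- by exists u2, v.
move=> _ _ [e [v1 [-> /generates_nilE -> lc1]]] [u2' [v2 [-> gen_u2 lc2]]].
exists (a :: v1 ++ u2'), v2; split => //; first by rewrite catA.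
rewrite Ed -[a :: _]cat0s; apply: generates_cat gen_beta _.
by rewrite -cat_cons -cat1s; apply: generates_cat gen_u2; exact/generates_lcorner.
Qed.

Lemma split_lcorner T B a w : lcorner T B (a :: w) -> split2 item_lang (lcorner T B) a w.
Proof.
move Ew: (a :: w) => w0 lc.
elim: lc a w Ew => // Y X B0 beta delta u v BP gen_beta gen_delta lc IH a w.
case: u gen_delta => [|b u] gen_delta /= Ew.
  apply: (split2_weaken _ (IH a w Ew)) => x lcx.
  exact: (lcorner_step (u := [::])) BP gen_beta gen_delta lcx.
have deltaP : delta \in rhs_suffixes.
  by rewrite -(drop_size_cat_cons beta delta X); apply: drop_rhs_suffix BP.
case: Ew => -> ->; apply: (split2_weaken _ (split_first deltaP gen_delta lc)).
by move=> x [u' [v' [-> gen_u lc_v]]]; apply: lcorner_step BP gen_beta gen_u lc_v.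
Qed.

Lemma split_corner_lang d T B a w : d \in rhs_suffixes ->
  corner_lang d T B (a :: w) -> split2 item_lang (corner_lang d T B) a w.
Proof.
move=> dP [[|b u] [v [/= Ew gen_u lc]]].
  rewrite -Ew in lc; apply: (split2_weaken _ (split_lcorner lc)) => x lcx.
  by exists [::], x.
by case: Ew => -> ->; apply: split_first.
Qed.

Lemma item_lang_greibach : greibach (nonempty_lang item_lang).
Proof.
apply: greibach_nonempty_lang => -[[[d dP] T] B] a w.
exact: split_corner_lang.
Qed.

Definition start_item (a : Sigma) : item := (SeqSub nil_rhs_suffix, inl (gS G), inr a).

Lemma start_item_lang a w : item_lang (start_item a) w <-> CFG_lang G (a :: w).
Proof.
rewrite CFG_langE generates_lcorner; split=> [[u [v [-> /generates_nilE -> //]]]|lc].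
by exists [::], w; split => //; exact: gen_nil.
Qed.

End Items.

Section GreibachMachine.
Variables (Sigma Item : finType) (K : Item -> seq Sigma -> Prop) (L : seq Sigma -> Prop).
Hypothesis K_nil : forall i, ~ K i [::].
Hypothesis K_greibach : greibach K.
Hypothesis L_nil : ~ L [::].
Hypothesis L_cons : forall a w, L (a :: w) ->
  exists2 t, K t w & forall v, K t v -> L (a :: v).

Definition expands (t : Item) (a : Sigma) (r : seq Item) : Prop :=
  forall x, cat_lang K r x -> K t (a :: x).

(* In a state (a, Some t, e) the machine has just output a and still has to
   output a word of K t followed by words of the items stacked above the
   bottom symbol, which is a dummy.  The flag e, also stored with every
   pushed item, tells whether the stack holds nothing but the dummy. *)
Definition gnf_state : finType := (Sigma * option Item * bool)%type.
Definition gnf_symbol : finType := (Item * bool)%type.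

Definition gnf_move (q : gnf_state) (g g' : option gnf_symbol) (q' : gnf_state) : Prop :=
  let: (_, ot, e) := q in
  let: (a', ot', e') := q' in
  exists2 t, ot = Some t & match g, g' with
  | None, None => exists2 j, ot' = Some j /\ e' = e & expands t a' [:: j]
  | None, Some (j2, f) =>
      exists2 j1, [/\ ot' = Some j1, f = e & e' = false] & expands t a' [:: j1; j2]
  | Some (y, f), None =>
      expands t a' [::] /\ if e then ot' = None else ot' = Some y /\ e' = f
  | Some _, Some _ => False
  end.

Lemma gnf_move_ok q g g' q' : ~~ `[< gnf_move q (Some g) (Some g') q' >].
Proof.
by case: q q' g g' => [[a ot] e] [[a' ot'] e'] [y f] [y' f']; apply/asboolP => -[].
Qed.

Definition gnf_mpda : MPDA Sigma := {|
  mQ := gnf_state;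
  mGamma := gnf_symbol;
  mdelta := fun x => `[< gnf_move x.1.1.1 x.1.1.2 x.1.2 x.2 >];
  mdelta_ok := gnf_move_ok;
  mtau := fun q => q.1.1;
  mI := fun q => `[< exists2 t, q.1.2 = Some t /\ q.2 = true &
                      forall v, K t v -> L (q.1.1 :: v) >];
  mF := fun q => q.1.2 == None |}.

Fixpoint flags_ok (m : seq gnf_symbol) (e : bool) : bool :=
  if m is (_, f) :: m' then ~~ e && flags_ok m' f else e.

Definition pending (c : config gnf_mpda) (sg : seq Item) : Prop :=
  let: (_, ot, e) := c.1 in
  if ot is Some t then
    exists mid z, [/\ c.2 = rcons mid z, flags_ok mid e & sg = t :: map fst mid]
  else sg = [::] /\ c.2 = [::].

Lemma mstep_pending c c1 sg : mstep c c1 -> pending c sg ->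
  exists t rest r, [/\ sg = t :: rest, expands t c1.1.1.1 r & pending c1 (r ++ rest)].
Proof.
case: c c1 => [[[a ot] e] s] [[[a' ot'] e'] s'].
case=> g [g' [al [/asboolP /= [t ->] + [/= Es [/= -> _]]]]].
move=> move_ok [mid [z [/= Es' flags ->]]]; exists t, (map fst mid).
case: g g' Es move_ok => [[y f]|] [[j2 f2]|] //= Es.
- case=> exp_t; case: e flags Es' => [|] flags Es'.
    case: mid flags Es' => [|[? ?] ?] // _; rewrite Es => -[_ ->] ->.
    by exists [::].
  case: mid flags Es' => [|[y' f'] mid] //= flags; rewrite Es => -[-> -> ->] [-> ->].
  by exists [::]; split => //; exists mid, z.
- case=> j1 [-> -> ->] exp_t; exists [:: j1; j2]; split => //.
  by exists ((j2, e) :: mid), z; rewrite -Es Es'.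
- case=> j [-> ->] exp_t; exists [:: j]; split => //.
  by exists mid, z; rewrite -Es Es'.
Qed.

Lemma pending_mstep c t rest r a' : pending c (t :: rest) -> expands t a' r ->
  size r <= 2 -> exists c1, [/\ mstep c c1, c1.1.1.1 = a' & pending c1 (r ++ rest)].
Proof.
case: c => [[[a [t0|]] e] s] [] // mid [[y0 f0] [/= -> flags [<- ->]]] exp_t.
case: r exp_t => [|j [|j2 [|? ?]]] // exp_t _.
- case: e flags => [|] flags.
    case: mid flags => [|[? ?] ?] //= _.
    exists ((a', None, true), [::]); split => //.
    by exists (Some (y0, f0)), None, [::]; split => //; apply/asboolP; exists t.
  case: mid flags => [|[y f] mid] //= flags.
  exists ((a', Some y, f), rcons mid (y0, f0)); split => //; last by exists mid, (y0, f0).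
  exists (Some (y, f)), None, (rcons mid (y0, f0)); split => //.
  by apply/asboolP; exists t.
- exists ((a', Some j, e), rcons mid (y0, f0)); split => //; last by exists mid, (y0, f0).
  exists None, None, (rcons mid (y0, f0)); split => //; last by case: (mid).
  by apply/asboolP; exists t => //; exists j.
- exists ((a', Some j, false), (j2, e) :: rcons mid (y0, f0)); split => //.
    exists None, (Some (j2, e)), (rcons mid (y0, f0)); split => //; last by case: (mid).
    by apply/asboolP; exists t => //; exists j.
  by exists ((j2, e) :: mid), (y0, f0).
Qed.

Lemma mrun_pending c c' u : mrun c c' u -> mfinal c' ->
  forall sg, pending c sg -> cat_lang K sg u.
Proof.
elim=> [c0|c0 c1 c2 w step _ IH] fin_c sg.
  by case: c0 fin_c => [[[a ot] e] s] [/eqP /= -> _] [->].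
move=> /(mstep_pending step) [t [rest [r [-> exp_t pend_c1]]]].
have [w1 [w2 [-> K_w1 K_w2]]] := cat_lang_catP (IH fin_c _ pend_c1).
by exists (c1.1.1.1 :: w1), w2; split => //; split => //; apply: exp_t.
Qed.

Lemma pending_mrun u c sg : pending c sg -> cat_lang K sg u ->
  exists2 c', mrun c c' u & mfinal c'.
Proof.
elim: u c sg => [|a u IH] c [|t rest] pend_c /=.
- exists c; first exact: mrun0.
  case: c pend_c => [[[a [t|]] e] s] /=; first by case=> mid [z []].
  by case=> _ /= ->.
- case=> u [v [Euv [K_u _]]].
  by case: u Euv K_u => // _ /K_nil.
- by [].
case=> [[|b u1] [v [Eu [K_u1 K_v]]]]; first by case: (K_nil K_u1).
case: Eu K_u1 => -> Eu /K_greibach [r [size_r [K_r exp_t]]].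
have [c1 [step <- pend_c1]] := pending_mstep pend_c exp_t size_r.
have K_u : cat_lang K (r ++ rest) u by rewrite Eu; apply: cat_lang_cat K_r K_v.
have [c' run fin] := IH c1 _ pend_c1 K_u.
by exists c' => //; apply: mrunS step run.
Qed.

Lemma gnf_mpda_correct w : MPDA_lang gnf_mpda w <-> L w.
Proof.
rewrite MPDA_langE; split.
  case=> -[[[a ot] e] s] [c [u [[/asboolP [t [/= -> ->] Lt] size1] fin run ->]]].
  apply: Lt; case: s size1 run => [|z [|? ?]] // _ /mrun_pending /(_ fin).
  case/(_ [:: t]); first by exists [::], z.
  by move=> u1 [_ [-> [K_u1 ->]]]; rewrite cats0.
case: w => [/L_nil //|a w] /L_cons [t K_w Lt].
have pend : pending ((a, Some t, true), [:: (t, true)]) [:: t] by exists [::], (t, true).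
have [|c run fin] := pending_mrun pend (u := w); first by exists w, [::]; rewrite cats0.
exists ((a, Some t, true), [:: (t, true)]), c, w; split => //.
by split => //; apply/asboolP; exists t.
Qed.

End GreibachMachine.

Theorem theorem3p2 (Sigma : finType) (L : seq Sigma -> Prop) :
  (exists A : MPDA Sigma, forall w, MPDA_lang A w <-> L w) <->
  (context_free L /\ forall w, L w -> 2 <= size w).
Proof.
split=> [[A AL]|[[G GL] L_size]].
  split=> [|w /AL]; last exact: MPDA_lang_size.
  by exists (triple_grammar A) => w; rewrite triple_grammar_correct.
exists (gnf_mpda (nonempty_lang (@item_lang _ G)) L) => w.
apply: gnf_mpda_correct => [i []|||a v] //; first exact: item_lang_greibach.
  by move/L_size.
move=> /[dup] /L_size size_v /GL/start_item_lang item_v.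
exists (start_item G a); first by split=> // Ev; rewrite Ev in size_v.
by move=> x [_ /start_item_lang /GL].
Qed.
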